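(* For all (possibly open) terms $t_0,t_1$ of $\lambda_S$, if $t_0$ and $t_1$ are CPS equivalent then $t_0\;(\approx^p_\emptyset)^{\circ}\;t_1$.
   Context: Terms of $\lambda_S$: $t ::= x \mid \lambda x.t \mid t\,t \mid \mathcal{S}k.t \mid \langle t\rangle$ (shift binds $k$; $\langle\cdot\rangle$ reset), up to $\alpha$-conversion; $\mathrm{fv}(t)$ free variables. Values $v::=\lambda x.t$. Pure contexts $E ::= \Box \mid v\,E \mid E\,t$; evaluation contexts $F ::= \Box \mid v\,F \mid F\,t \mid \langle F\rangle$. Reduction: $F[(\lambda x.t)v]\to F[t\{v/x\}]$; $F[\langle E[\mathcal Sk.t]\rangle]\to F[\langle t\{\lambda x.\langle E[x]\rangle/k\}\rangle]$ ($x\notin\mathrm{fv}(E)$); $F[\langle v\rangle]\to F[v]$; $\to^*$ reflexive-transitive closure. Program: term $\langle t\rangle$ (ranged over by $p$). CPS equivalence: $t_0,t_1$ are CPS equivalent if their (Danvy–Filinski call-by-value) CPS translations are $\beta\eta$-convertible; equivalently (Kameyama–Hasegawa), if $t_0=t_1$ is derivable in the congruence generated by the axioms (with variables counted as values, $\mathcal{E}$ pure contexts): $(\lambda x.t)v=t\{v/x\}$; $(\lambda x.E[x])t=E[t]$ if $x\notin\mathrm{fv}(E)$; $\langle E[\mathcal Sk.t]\rangle=\langle t\{\lambda x.\langle E[x]\rangle/k\}\rangle$; $\langle(\lambda x.t_0)\langle t_1\rangle\rangle=(\lambda x.\langle t_0\rangle)\langle t_1\rangle$; $\langle v\rangle=v$;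 $\mathcal Sk.\langle t\rangle=\mathcal Sk.t$; $\lambda x.v\,x=v$ if $x\notin\mathrm{fv}(v)$; $\mathcal Sk.(k\,t)=t$ if $k\notin\mathrm{fv}(t)$. Closures: for $R$ a relation on closed terms, $\widetilde R$ is the smallest relation containing $R$, all $(x,x)$, closed under all term constructors, restricted to closed terms; $\widehat R$ is the smallest relation on closed evaluation contexts with $\Box\widehat R\Box$, $v_0F_0\widehat Rv_1F_1$ if $F_0\widehat RF_1,v_0\widetilde Rv_1$; $F_0t_0\widehat RF_1t_1$ if $F_0\widehat RF_1,t_0\widetilde Rt_1$; $\langle F_0\rangle\widehat R\langle F_1\rangle$ if $F_0\widehat RF_1$. Environmental bisimilarity for programs: an environment $\mathcal E$ is a relation on closed values; an environmental relation $\mathcal X$ is a set of environments and triples $(\mathcal E,t_0,t_1)$, $t_0,t_1$ closed, written $t_0\mathcal X_{\mathcal E}t_1$. $\mathcal X$ is an environmental bisimulation for programs if (1) if $t_0\mathcal X_{\mathcal E}t_1$ and $t_0,t_1$ are not both programs, then for all pure $E_0\widehat{\mathcal E}E_1$, $\langle E_0[t_0]\rangle\mathcal X_{\mathcal E}\langle E_1[t_1]\rangle$; (2) if $p_0\mathcal X_{\mathcal E}p_1$: (a) $p_0\to p_0'$ (program) implies $p_1\to^*p_1'$ (program) with $p_0'\mathcal X_{\mathcal E}p_1'$; (b) $p_0\to v_0$ implies $p_1\to^*v_1$ and $\{(v_0,v_1)\}\cup\mathcal E\in\mathcal X$; (c) symmetric conditions; (3) for $\mathcal E\in\mathcal X$,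 $(\lambda x.t_0)\mathcal E(\lambda x.t_1)$ and $v_0\widetilde{\mathcal E}v_1$ imply $t_0\{v_0/x\}\mathcal X_{\mathcal E}t_1\{v_1/x\}$. $\approx^p$ is the largest such relation; $t_0\approx^p_{\emptyset}t_1$ means $(\emptyset,t_0,t_1)\in\approx^p$. Open extension: for terms $t_0,t_1$ with $\vec x=\mathrm{fv}(t_0)\cup\mathrm{fv}(t_1)$, $t_0\,(\approx^p_\emptyset)^\circ\,t_1$ iff $\lambda\vec x.t_0\approx^p_\emptyset\lambda\vec x.t_1$. *)

(* lambda_S (call-by-value lambda calculus with shift/reset)
   in de Bruijn representation (alpha-conversion built in). *)
From Stdlib Require Import Arith.

Inductive term : Type :=
| Var (n : nat)
| Lam (t : term)
| App (t u : term)
| Shift (t : term)          (* S k. t : binds k as index 0 *)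
| Reset (t : term).

Definition up_ren (xi : nat -> nat) : nat -> nat :=
  fun n => match n with 0 => 0 | S n' => S (xi n') end.

Fixpoint ren (xi : nat -> nat) (t : term) : term :=
  match t with
  | Var n => Var (xi n)
  | Lam t => Lam (ren (up_ren xi) t)
  | App t u => App (ren xi t) (ren xi u)
  | Shift t => Shift (ren (up_ren xi) t)
  | Reset t => Reset (ren xi t)
  end.

Definition lift (t : term) : term := ren S t.

Definition up (sigma : nat -> term) : nat -> term :=
  fun n => match n with 0 => Var 0 | S n' => lift (sigma n') end.

Fixpoint subst (sigma : nat -> term) (t : term) : term :=
  match t with
  | Var n => sigma n
  | Lam t => Lam (subst (up sigma) t)
  | App t u => App (subst sigma t) (subst sigma u)
  | Shift t => Shift (subst (up sigma) t)
  | Reset t => Reset (subst sigma t)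
  end.

(** [subst0 v t] is t{v/x} where x is the variable bound at index 0 *)
Definition subst0 (v t : term) : term :=
  subst (fun n => match n with 0 => v | S n' => Var n' end) t.

Fixpoint closed_at (k : nat) (t : term) : Prop :=
  match t with
  | Var n => n < k
  | Lam t => closed_at (S k) t
  | App t u => closed_at k t /\ closed_at k u
  | Shift t => closed_at (S k) t
  | Reset t => closed_at k t
  end.

Definition closed (t : term) : Prop := closed_at 0 t.

Fixpoint fvbound (t : term) : nat :=
  match t with
  | Var n => S n
  | Lam t => pred (fvbound t)
  | App t u => Nat.max (fvbound t) (fvbound u)
  | Shift t => pred (fvbound t)
  | Reset t => fvbound t
  end.

Definition lams (n : nat) (t : term) : term := Nat.iter n Lam t.

Definition is_val (t : term) : Prop := exists b, t = Lam b.
(** values of the Kameyama-Hasegawa axioms: variables counted as values *)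
Definition kh_val (t : term) : Prop := is_val t \/ exists n, t = Var n.

Inductive ectx : Type :=
| EHole
| EAppR (v : term) (F : ectx)
| EAppL (F : ectx) (t : term)
| EReset (F : ectx).

Fixpoint plug (F : ectx) (t : term) : term :=
  match F with
  | EHole => t
  | EAppR v F => App v (plug F t)
  | EAppL F u => App (plug F t) u
  | EReset F => Reset (plug F t)
  end.

Fixpoint ren_ectx (xi : nat -> nat) (F : ectx) : ectx :=
  match F with
  | EHole => EHole
  | EAppR v F => EAppR (ren xi v) (ren_ectx xi F)
  | EAppL F u => EAppL (ren_ectx xi F) (ren xi u)
  | EReset F => EReset (ren_ectx xi F)
  end.

Definition lift_ectx (F : ectx) : ectx := ren_ectx S F.

Fixpoint vals_ok (P : term -> Prop) (F : ectx) : Prop :=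
  match F with
  | EHole => True
  | EAppR v F => P v /\ vals_ok P F
  | EAppL F _ => vals_ok P F
  | EReset F => vals_ok P F
  end.

Fixpoint no_reset (F : ectx) : Prop :=
  match F with
  | EHole => True
  | EAppR _ F => no_reset F
  | EAppL F _ => no_reset F
  | EReset _ => False
  end.

Definition eval_ctx (F : ectx) : Prop := vals_ok is_val F.
Definition pure_ctx (E : ectx) : Prop := no_reset E /\ vals_ok is_val E.
Definition kh_pure_ctx (E : ectx) : Prop := no_reset E /\ vals_ok kh_val E.

Inductive contract : term -> term -> Prop :=
| c_beta : forall t v, is_val v -> contract (App (Lam t) v) (subst0 v t)
| c_shift : forall E t, pure_ctx E ->
    contract (Reset (plug E (Shift t)))
             (Reset (subst0 (Lam (Reset (plug (lift_ectx E) (Var 0)))) t))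
| c_reset : forall v, is_val v -> contract (Reset v) v.

Inductive step : term -> term -> Prop :=
| step_ctx : forall F a b, eval_ctx F -> contract a b -> step (plug F a) (plug F b).

Inductive steps : term -> term -> Prop :=
| steps_refl : forall t, steps t t
| steps_cons : forall t u w, step t u -> steps u w -> steps t w.

Definition is_program (t : term) : Prop := exists t', t = Reset t'.

Inductive cps_eq : term -> term -> Prop :=
| ce_refl : forall t, cps_eq t t
| ce_sym : forall t u, cps_eq t u -> cps_eq u t
| ce_trans : forall t u w, cps_eq t u -> cps_eq u w -> cps_eq t w
| ce_lam : forall t u, cps_eq t u -> cps_eq (Lam t) (Lam u)
| ce_app : forall t t' u u', cps_eq t t' -> cps_eq u u' -> cps_eq (App t u) (App t' u')
| ce_shift : forall t u, cps_eq t u -> cps_eq (Shift t) (Shift u)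
| ce_reset : forall t u, cps_eq t u -> cps_eq (Reset t) (Reset u)
| ax_beta_v : forall t v, kh_val v -> cps_eq (App (Lam t) v) (subst0 v t)
(* (lambda x.E[x]) t = E[t],  x notin fv(E) *)
| ax_beta_omega : forall E t, kh_pure_ctx E ->
    cps_eq (App (Lam (plug (lift_ectx E) (Var 0))) t) (plug E t)
(* <E[S k.t]> = <t{lambda x.<E[x]>/k}> *)
| ax_reset_shift : forall E t, kh_pure_ctx E ->
    cps_eq (Reset (plug E (Shift t)))
           (Reset (subst0 (Lam (Reset (plug (lift_ectx E) (Var 0)))) t))
| ax_reset_lift : forall t0 t1,
    cps_eq (Reset (App (Lam t0) (Reset t1))) (App (Lam (Reset t0)) (Reset t1))
| ax_reset_val : forall v, kh_val v -> cps_eq (Reset v) v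
| ax_shift_reset : forall t, cps_eq (Shift (Reset t)) (Shift t)
(* lambda x. v x = v,  x notin fv(v) *)
| ax_eta_v : forall v, kh_val v -> cps_eq (Lam (App (lift v) (Var 0))) v
(* S k.(k t) = t,  k notin fv(t) *)
| ax_shift_elim : forall t, cps_eq (Shift (App (Var 0) (lift t))) t.

Definition rel := term -> term -> Prop.

Inductive ctx_clo (R : rel) : term -> term -> Prop :=
| cc_base : forall t u, R t u -> ctx_clo R t u
| cc_var : forall n, ctx_clo R (Var n) (Var n)
| cc_lam : forall t u, ctx_clo R t u -> ctx_clo R (Lam t) (Lam u)
| cc_app : forall t t' u u', ctx_clo R t t' -> ctx_clo R u u' ->
    ctx_clo R (App t u) (App t' u')
| cc_shift : forall t u, ctx_clo R t u -> ctx_clo R (Shift t) (Shift u)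
| cc_reset : forall t u, ctx_clo R t u -> ctx_clo R (Reset t) (Reset u).

Definition tilde (R : rel) : rel :=
  fun t u => ctx_clo R t u /\ closed t /\ closed u.

Inductive hat (R : rel) : ectx -> ectx -> Prop :=
| hat_hole : hat R EHole EHole
| hat_appr : forall v0 v1 F0 F1, is_val v0 -> is_val v1 ->
    hat R F0 F1 -> tilde R v0 v1 -> hat R (EAppR v0 F0) (EAppR v1 F1)
| hat_appl : forall F0 F1 t0 t1,
    hat R F0 F1 -> tilde R t0 t1 -> hat R (EAppL F0 t0) (EAppL F1 t1)
| hat_reset : forall F0 F1, hat R F0 F1 -> hat R (EReset F0) (EReset F1).

Definition is_env (E : rel) : Prop :=
  forall a b, E a b -> is_val a /\ closed a /\ is_val b /\ closed b.

Record env_relation : Type := {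
  envs : rel -> Prop;
  trip : rel -> term -> term -> Prop
}.

Definition well_formed (X : env_relation) : Prop :=
  (forall E, envs X E -> is_env E) /\
  (forall E t0 t1, trip X E t0 t1 -> is_env E /\ closed t0 /\ closed t1).

Definition add_pair (v0 v1 : term) (E : rel) : rel :=
  fun a b => (a = v0 /\ b = v1) \/ E a b.

Definition env_bisim (X : env_relation) : Prop :=
  well_formed X /\
  (forall E t0 t1, trip X E t0 t1 -> ~ (is_program t0 /\ is_program t1) ->
     forall E0 E1, no_reset E0 -> no_reset E1 -> hat E E0 E1 ->
     trip X E (Reset (plug E0 t0)) (Reset (plug E1 t1))) /\
  (forall E p0 p1, trip X E p0 p1 -> is_program p0 -> is_program p1 ->
     (forall p0', step p0 p0' -> is_program p0' ->
        exists p1', steps p1 p1' /\ is_program p1' /\ trip X E p0' p1') /\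
     (forall v0, step p0 v0 -> is_val v0 ->
        exists v1, steps p1 v1 /\ is_val v1 /\ envs X (add_pair v0 v1 E)) /\
     (forall p1', step p1 p1' -> is_program p1' ->
        exists p0', steps p0 p0' /\ is_program p0' /\ trip X E p0' p1') /\
     (forall v1, step p1 v1 -> is_val v1 ->
        exists v0, steps p0 v0 /\ is_val v0 /\ envs X (add_pair v0 v1 E))) /\
  (forall E t0 t1 v0 v1, envs X E -> E (Lam t0) (Lam t1) ->
     is_val v0 -> is_val v1 -> tilde E v0 v1 ->
     trip X E (subst0 v0 t0) (subst0 v1 t1)).

Definition bisim_p (E : rel) (t0 t1 : term) : Prop :=
  exists X, env_bisim X /\ trip X E t0 t1.

Definition empty_env : rel := fun _ _ => False.

Definition bisim_p_empty (t0 t1 : term) : Prop := bisim_p empty_env t0 t1.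

Definition open_ext (R : rel) (t0 t1 : term) : Prop :=
  let n := Nat.max (fvbound t0) (fvbound t1) in
  R (lams n t0) (lams n t1).

(** The candidate relation relates closed CPS-equivalent terms, under
    environments of closed CPS-equivalent values.  CPS equivalence is a
    congruence containing reduction and beta_v, which settles every clause of
    an environmental bisimulation except one: when one of two CPS-equivalent
    programs reduces to a value, the other one must terminate too.  This
    adequacy property is proved with a step-indexed biorthogonal logical
    relation for shift and reset: it is compatible with all term constructors
    and validates every axiom of the Kameyama-Hasegawa theory, so each axiom
    instance is a contextual equivalence; contextual equivalence is a
    congruence and an equivalence, hence contains CPS equivalence. *)

From Stdlib Require Import Arith Lia.

Definition scons (v : term) (s : nat -> term) (n : nat) : term :=
  match n with 0 => v | S n' => s n' end.

Lemma ren_ext t xi zeta : (forall n, xi n = zeta n) -> ren xi t = ren zeta t.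
Proof.
  revert xi zeta; induction t; intros xi zeta H; simpl; f_equal; auto;
    apply IHt; intros [|n]; simpl; auto.
Qed.

Lemma subst_ext t s s' : (forall n, s n = s' n) -> subst s t = subst s' t.
Proof.
  revert s s'; induction t; intros s s' H; simpl; f_equal; auto;
    apply IHt; intros [|n]; simpl; auto; unfold lift; rewrite H; auto.
Qed.

Lemma ren_id t : ren (fun n => n) t = t.
Proof.
  induction t; simpl; f_equal; auto;
    rewrite <- IHt at 2; apply ren_ext; intros [|n]; reflexivity.
Qed.

Lemma ren_ren t xi zeta : ren xi (ren zeta t) = ren (fun n => xi (zeta n)) t.
Proof.
  revert xi zeta; induction t; intros xi zeta; simpl; f_equal; auto;
    rewrite IHt; apply ren_ext; intros [|n]; reflexivity.
Qed.

Lemma subst_ren t s xi : subst s (ren xi t) = subst (fun n => s (xi n)) t.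
Proof.
  revert s xi; induction t; intros s xi; simpl; f_equal; auto;
    rewrite IHt; apply subst_ext; intros [|n]; reflexivity.
Qed.

Lemma ren_subst t s xi : ren xi (subst s t) = subst (fun n => ren xi (s n)) t.
Proof.
  revert s xi; induction t; intros s xi; simpl; f_equal; auto;
    rewrite IHt; apply subst_ext; intros [|n]; simpl; auto;
    unfold lift; rewrite !ren_ren; apply ren_ext; reflexivity.
Qed.

Lemma subst_subst t s s' :
  subst s' (subst s t) = subst (fun n => subst s' (s n)) t.
Proof.
  revert s s'; induction t; intros s s'; simpl; f_equal; auto;
    rewrite IHt; apply subst_ext; intros [|n]; simpl; auto;
    unfold lift; rewrite subst_ren, ren_subst; apply subst_ext; reflexivity.
Qed.

Lemma subst_id t : subst Var t = t.
Proof.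
  induction t; simpl; f_equal; auto;
    rewrite <- IHt at 2; apply subst_ext; intros [|n]; reflexivity.
Qed.

Lemma subst_scons_lift w s t : subst (scons w s) (lift t) = subst s t.
Proof. unfold lift; rewrite subst_ren; apply subst_ext; reflexivity. Qed.

Lemma subst0_lift v t : subst0 v (lift t) = t.
Proof. exact (eq_trans (subst_scons_lift v Var t) (subst_id t)). Qed.

Lemma subst_up_lift s t : subst (up s) (lift t) = lift (subst s t).
Proof. unfold lift; rewrite subst_ren, ren_subst; apply subst_ext; reflexivity. Qed.

Lemma subst0_subst_up w s t : subst0 w (subst (up s) t) = subst (scons w s) t.
Proof.
  unfold subst0; rewrite subst_subst; apply subst_ext.
  intros [|n]; simpl; auto; apply subst0_lift.
Qed.

Lemma subst_subst0 s v t : subst s (subst0 v t) = subst0 (subst s v) (subst (up s) t).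
Proof.
  rewrite subst0_subst_up; unfold subst0; rewrite subst_subst.
  apply subst_ext; intros [|n]; reflexivity.
Qed.

Fixpoint subst_ectx (s : nat -> term) (F : ectx) : ectx :=
  match F with
  | EHole => EHole
  | EAppR v F => EAppR (subst s v) (subst_ectx s F)
  | EAppL F u => EAppL (subst_ectx s F) (subst s u)
  | EReset F => EReset (subst_ectx s F)
  end.

Lemma subst_plug s F t : subst s (plug F t) = plug (subst_ectx s F) (subst s t).
Proof. induction F; simpl; f_equal; auto. Qed.

Lemma subst_ectx_up_lift s F : subst_ectx (up s) (lift_ectx F) = lift_ectx (subst_ectx s F).
Proof. unfold lift_ectx in *; induction F; simpl; f_equal; auto; apply subst_up_lift. Qed.

Lemma subst_ectx_scons_lift w s F : subst_ectx (scons w s) (lift_ectx F) = subst_ectx s F.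
Proof. unfold lift_ectx in *; induction F; simpl; f_equal; auto; apply subst_scons_lift. Qed.

Lemma subst_ectx_id F : subst_ectx Var F = F.
Proof. induction F; simpl; f_equal; auto; apply subst_id. Qed.

(** [ectx_body E] is [E[x]] for a fresh [x] bound at index 0; [ectx_cont E] is
    the continuation [lambda x. <E[x]>] captured by a shift in [E]. *)
Definition ectx_body (E : ectx) : term := plug (lift_ectx E) (Var 0).
Definition ectx_cont (E : ectx) : term := Lam (Reset (ectx_body E)).

Lemma subst_up_ectx_body s E : subst (up s) (ectx_body E) = ectx_body (subst_ectx s E).
Proof. unfold ectx_body; rewrite subst_plug, subst_ectx_up_lift; reflexivity. Qed.

Lemma subst_scons_ectx_body w s E : subst (scons w s) (ectx_body E) = plug (subst_ectx s E) w.
Proof. unfold ectx_body; rewrite subst_plug, subst_ectx_scons_lift; reflexivity. Qed.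

Lemma subst0_ectx_body w E : subst0 w (ectx_body E) = plug E w.
Proof.
  exact (eq_trans (subst_scons_ectx_body w Var E)
                  (f_equal (fun F => plug F w) (subst_ectx_id E))).
Qed.

Fixpoint ecomp (F G : ectx) : ectx :=
  match F with
  | EHole => G
  | EAppR v F => EAppR v (ecomp F G)
  | EAppL F u => EAppL (ecomp F G) u
  | EReset F => EReset (ecomp F G)
  end.

Lemma plug_ecomp F G t : plug (ecomp F G) t = plug F (plug G t).
Proof. induction F; simpl; f_equal; auto. Qed.

Lemma plug_ecomp_reset F E t : plug (ecomp F (EReset E)) t = plug F (Reset (plug E t)).
Proof. apply plug_ecomp. Qed.

Lemma vals_ok_ecomp P F G : vals_ok P F -> vals_ok P G -> vals_ok P (ecomp F G).
Proof. induction F; simpl; intuition. Qed.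

Lemma vals_ok_impl (P Q : term -> Prop) F :
  (forall t, P t -> Q t) -> vals_ok P F -> vals_ok Q F.
Proof. induction F; simpl; intuition. Qed.

Lemma eval_ctx_ecomp F G : eval_ctx F -> eval_ctx G -> eval_ctx (ecomp F G).
Proof. apply vals_ok_ecomp. Qed.

Lemma pure_ctx_ecomp F G : pure_ctx F -> pure_ctx G -> pure_ctx (ecomp F G).
Proof.
  intros [NF VF] [NG VG]; split; [|apply vals_ok_ecomp; auto].
  clear VF VG; induction F; simpl in *; tauto.
Qed.

Lemma pure_kh_pure_ctx E : pure_ctx E -> kh_pure_ctx E.
Proof.
  intros [N V]; split; auto; apply (vals_ok_impl is_val); auto; now left.
Qed.

Lemma eval_ctx_reset E F : pure_ctx E -> eval_ctx F -> eval_ctx (EReset (ecomp E F)).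
Proof. intros [_ HE] HF; apply vals_ok_ecomp; auto. Qed.

Lemma pure_ctx_appr v E : is_val v -> pure_ctx E -> pure_ctx (EAppR v E).
Proof. intros Hv [N V]; repeat split; auto. Qed.

Lemma pure_ctx_appl E t : pure_ctx E -> pure_ctx (EAppL E t).
Proof. intros [N V]; split; auto. Qed.

Lemma pure_ctx_hole : pure_ctx EHole.
Proof. split; exact I. Qed.

Lemma lam_is_val b : is_val (Lam b).
Proof. now exists b. Qed.

(** * Reduction and its determinism *)

Lemma contract_step a b : contract a b -> step a b.
Proof. intros; apply (step_ctx EHole); [exact I | assumption]. Qed.

Lemma contract_beta_ectx_body E w : is_val w ->
  contract (App (Lam (ectx_body E)) w) (plug E w).
Proof. intros Hw; rewrite <- (subst0_ectx_body w E); constructor; exact Hw. Qed.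

Lemma step_plug F a b : eval_ctx F -> step a b -> step (plug F a) (plug F b).
Proof.
  intros HF [G x y HG Hc]; rewrite <- !plug_ecomp.
  constructor; [apply eval_ctx_ecomp|]; assumption.
Qed.

Lemma step_reset_plug E a b : pure_ctx E -> contract a b ->
  step (Reset (plug E a)) (Reset (plug E b)).
Proof. intros [_ HE] Hc; apply (step_plug (EReset E)); [exact HE | apply contract_step, Hc]. Qed.

Lemma steps_one a b : step a b -> steps a b.
Proof. intros; econstructor; eauto using steps_refl. Qed.

Lemma steps_trans a b c : steps a b -> steps b c -> steps a c.
Proof. induction 1; eauto using steps_cons. Qed.

Lemma steps_plug F a b : eval_ctx F -> steps a b -> steps (plug F a) (plug F b).
Proof. induction 2; eauto using steps_refl, steps_cons, step_plug. Qed.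

Inductive nsteps : nat -> term -> term -> Prop :=
| nsteps_refl t : nsteps 0 t t
| nsteps_cons n t u w : step t u -> nsteps n u w -> nsteps (S n) t w.

Lemma steps_nsteps a b : steps a b -> exists n, nsteps n a b.
Proof.
  induction 1 as [|t u w Hs _ [n Hn]]; [exists 0 | exists (S n)];
    eauto using nsteps, nsteps_cons.
Qed.

Definition redex (a : term) : Prop := exists b, contract a b.

Lemma plug_lam F a b : plug F a = Lam b -> F = EHole.
Proof. destruct F; simpl; congruence. Qed.

Lemma plug_redex_not_val F a : redex a -> ~ is_val (plug F a).
Proof.
  intros [c Hc] [b Hb]; rewrite (plug_lam F a b Hb) in Hb; simpl in Hb; subst.
  inversion Hc.
Qed.

Lemma plug_shift_not_val F t : ~ is_val (plug F (Shift t)).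
Proof. intros [b Hb]; rewrite (plug_lam F _ b Hb) in Hb; discriminate. Qed.

Ltac not_val :=
  exfalso;
  match goal with
  | H : plug ?F (Shift ?t) = Lam ?b |- _ => apply (plug_shift_not_val F t); now exists b
  | H : Lam ?b = plug ?F (Shift ?t) |- _ => apply (plug_shift_not_val F t); now exists b
  | H : plug ?F ?a = Lam ?b |- _ =>
      apply (plug_redex_not_val F a); [assumption | now exists b]
  | H : Lam ?b = plug ?F ?a |- _ =>
      apply (plug_redex_not_val F a); [assumption | now exists b]
  | H : is_val (plug ?F (Shift ?t)) |- _ => exact (plug_shift_not_val F t H)
  | H : is_val (plug ?F ?a) |- _ => exact (plug_redex_not_val F a ltac:(assumption) H)
  end.

Lemma pure_shift_not_redex E t F a : pure_ctx E -> eval_ctx F -> redex a ->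
  plug E (Shift t) <> plug F a.
Proof.
  revert F; induction E as [|v E IH|E IH u|E IH]; intros F [NE VE] HF Ha Heq;
    [|destruct VE as [[b ->] VE] | | contradiction];
    destruct F as [|w F|F u'|F]; simpl in *; try discriminate.
  - subst; destruct Ha as [c Hc]; inversion Hc.
  - subst; destruct Ha as [c Hc]; inversion Hc; subst; not_val.
  - injection Heq; intros; apply (IH F); auto; [split; auto | apply HF].
  - injection Heq; intros; subst; not_val.
  - subst; destruct Ha as [c Hc]; inversion Hc; subst; not_val.
  - destruct HF as [[b Hb] _]; injection Heq; intros; subst; not_val.
  - injection Heq; intros; apply (IH F); auto; split; auto.
Qed.

Lemma unique_decomposition F1 a1 F2 a2 : eval_ctx F1 -> eval_ctx F2 ->
  redex a1 -> redex a2 -> plug F1 a1 = plug F2 a2 -> F1 = F2 /\ a1 = a2.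
Proof.
  revert F2; induction F1 as [|v F1 IH|F1 IH u|F1 IH]; intros F2 H1 H2 R1 R2 Heq;
    destruct F2 as [|w F2|F2 u'|F2]; simpl in *; try discriminate; auto.
  - subst; destruct R1 as [c Hc]; inversion Hc; subst; not_val.
  - subst; destruct R1 as [c Hc]; inversion Hc; subst; not_val.
  - subst; destruct R1 as [c Hc]; inversion Hc; subst; [|not_val].
    exfalso; exact (pure_shift_not_redex _ _ F2 a2 H0 H2 R2 H).
  - subst; destruct R2 as [c Hc]; inversion Hc; subst; not_val.
  - injection Heq; intros; subst.
    destruct (IH F2) as [-> ->]; auto; [apply H1 | apply H2].
  - destruct H1 as [[b ->] _]; injection Heq; intros; subst; not_val.
  - subst; destruct R2 as [c Hc]; inversion Hc; subst; not_val.
  - destruct H2 as [[b ->] _]; injection Heq; intros; subst; not_val.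
  - injection Heq; intros; subst; destruct (IH F2) as [-> ->]; auto.
  - subst; destruct R2 as [c Hc]; inversion Hc; subst; [|not_val].
    exfalso; exact (pure_shift_not_redex _ _ F1 a1 H0 H1 R1 H).
  - injection Heq; intros; subst; destruct (IH F2) as [-> ->]; auto.
Qed.

Lemma pure_shift_injective E1 t1 E2 t2 : pure_ctx E1 -> pure_ctx E2 ->
  plug E1 (Shift t1) = plug E2 (Shift t2) -> E1 = E2 /\ t1 = t2.
Proof.
  revert E2; induction E1 as [|v E1 IH|E1 IH u|E1 IH]; intros E2 [N1 V1] [N2 V2] Heq;
    destruct E2 as [|w E2|E2 u'|E2]; simpl in *; try discriminate; try contradiction.
  - injection Heq; auto.
  - injection Heq; intros; subst.
    destruct (IH E2) as [-> ->]; [split| split|..]; tauto.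
  - destruct V1 as [[b ->] _]; injection Heq; intros; subst; not_val.
  - destruct V2 as [[b ->] _]; injection Heq; intros; subst; not_val.
  - injection Heq; intros; subst; destruct (IH E2) as [-> ->]; auto; split; auto.
Qed.

Lemma contract_det a b c : contract a b -> contract a c -> b = c.
Proof.
  intros H1 H2; destruct H1; inversion H2; subst; auto; try not_val.
  match goal with H : plug _ _ = plug _ _ |- _ => symmetry in H end.
  destruct (pure_shift_injective _ _ _ _ H H1 H0) as [-> ->]; auto.
Qed.

Lemma step_det a b c : step a b -> step a c -> b = c.
Proof.
  intros [F1 x1 y1 HF1 Hc1] H2; inversion H2 as [F2 x2 y2 HF2 Hc2 Heq].
  destruct (unique_decomposition F1 x1 F2 x2) as [-> ->]; auto;
    [now exists y1 | now exists y2 |].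
  now rewrite (contract_det _ _ _ Hc1 Hc2).
Qed.

Lemma val_irreducible v b : is_val v -> ~ step v b.
Proof.
  intros [c ->] H; inversion H as [F a b' HF Hc Heq]; subst.
  apply (plug_redex_not_val F a); [now exists b' | rewrite Heq; apply lam_is_val].
Qed.

Lemma nsteps_step_val n a a' v : step a a' -> nsteps n a v -> is_val v ->
  exists n', n = S n' /\ nsteps n' a' v.
Proof.
  intros Hs H Hv; inversion H; subst.
  - exfalso; eapply val_irreducible; eauto.
  - rewrite (step_det _ _ _ Hs H0); eauto.
Qed.

(** * A step-indexed biorthogonal logical relation *)

Definition terminates (t : term) : Prop := exists v, steps t v /\ is_val v.

Definition obs (k : nat) (a b : term) : Prop :=
  forall n v, n < k -> nsteps n a v -> is_val v -> terminates b.

(** Relations on values ([Vf]), evaluation contexts ([MrelF]), programs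
    ([PrelF]), pure contexts placed under a reset ([KrelF]) and terms
    ([ErelF]), each one defined from the previous by biorthogonality. *)
Section Biorthogonal.
Variable Vf : nat -> rel.

Definition MrelF (k : nat) (F0 F1 : ectx) : Prop :=
  eval_ctx F0 /\ eval_ctx F1 /\
  forall j, j <= k -> forall w0 w1, Vf j w0 w1 -> obs j (plug F0 w0) (plug F1 w1).

Definition PrelF (k : nat) (p0 p1 : term) : Prop :=
  forall j, j <= k -> forall F0 F1, MrelF j F0 F1 -> obs j (plug F0 p0) (plug F1 p1).

Definition KrelF (k : nat) (E0 E1 : ectx) : Prop :=
  pure_ctx E0 /\ pure_ctx E1 /\
  forall j, j <= k -> forall w0 w1, Vf j w0 w1 ->
    PrelF j (Reset (plug E0 w0)) (Reset (plug E1 w1)).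

Definition ErelF (k : nat) (t0 t1 : term) : Prop :=
  forall j, j <= k -> forall E0 E1, KrelF j E0 E1 ->
    PrelF j (Reset (plug E0 t0)) (Reset (plug E1 t1)).

Definition Vrel_next (k : nat) (v0 v1 : term) : Prop :=
  Vf k v0 v1 /\
  forall b0 b1, v0 = Lam b0 -> v1 = Lam b1 ->
    forall w0 w1, Vf k w0 w1 -> ErelF k (subst0 w0 b0) (subst0 w1 b1).

End Biorthogonal.

Section Extensionality.
Variables Vf Vg : nat -> rel.
Variable k : nat.
Hypothesis Vf_Vg : forall j, j <= k -> forall a b, Vf j a b <-> Vg j a b.

Lemma MrelF_ext i F0 F1 : i <= k -> MrelF Vf i F0 F1 <-> MrelF Vg i F0 F1.
Proof.
  intros Hi; split; intros (HF0 & HF1 & HM); do 2 (split; [assumption|]);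
    intros j Hj w0 w1 Hw; apply HM; auto; apply Vf_Vg; auto; lia.
Qed.

Lemma PrelF_ext i p0 p1 : i <= k -> PrelF Vf i p0 p1 <-> PrelF Vg i p0 p1.
Proof.
  intros Hi; split; intros HP j Hj F0 F1 HM; apply HP; auto;
    apply (MrelF_ext j); auto; lia.
Qed.

Lemma KrelF_ext i E0 E1 : i <= k -> KrelF Vf i E0 E1 <-> KrelF Vg i E0 E1.
Proof.
  intros Hi; split; intros (HE0 & HE1 & HK); do 2 (split; [assumption|]);
    intros j Hj w0 w1 Hw; apply (PrelF_ext j); try lia; apply HK; auto;
    apply Vf_Vg; auto; lia.
Qed.

Lemma ErelF_ext i t0 t1 : i <= k -> ErelF Vf i t0 t1 <-> ErelF Vg i t0 t1.
Proof.
  intros Hi; split; intros HE j Hj E0 E1 HK; apply (PrelF_ext j); try lia;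
    apply HE; auto; apply (KrelF_ext j); auto; lia.
Qed.

End Extensionality.

(** [Vrel (S k)] refers to [Vrel j] for every [j <= k] (through [ErelF]), so
    the value relations are built together: [Vrel_upto k j] is the value
    relation at index [min j k]. *)
Fixpoint Vrel_upto (k : nat) : nat -> rel :=
  match k with
  | 0 => fun _ v0 v1 => is_val v0 /\ is_val v1
  | S k' => fun j => if j <=? k' then Vrel_upto k' j else Vrel_next (Vrel_upto k') k'
  end.

Definition Vrel (k : nat) : rel := Vrel_upto k k.
Definition Mrel := MrelF Vrel.
Definition Prel := PrelF Vrel.
Definition Krel := KrelF Vrel.
Definition Erel := ErelF Vrel.

Lemma Vrel_upto_le k j : j <= k -> Vrel_upto k j = Vrel j.
Proof.
  revert j; induction k as [|k IH]; intros j Hj.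
  - now replace j with 0 by lia.
  - destruct (Nat.eq_dec j (S k)) as [->|Hne]; [reflexivity|].
    simpl; replace (j <=? k) with true by (symmetry; apply Nat.leb_le; lia).
    apply IH; lia.
Qed.

Lemma Vrel_S k v0 v1 : Vrel (S k) v0 v1 <-> Vrel_next Vrel k v0 v1.
Proof.
  assert (Hgt : (S k <=? k) = false) by (apply Nat.leb_gt; lia).
  unfold Vrel at 1; simpl; simpl in Hgt; rewrite Hgt.
  assert (Hupto : forall j, j <= k -> forall a b, Vrel_upto k j a b <-> Vrel j a b)
    by (intros j Hj a b; rewrite Vrel_upto_le; tauto).
  split; intros [Hv Happ]; split; auto; intros; apply (ErelF_ext _ _ k Hupto); auto.
Qed.

Lemma Vrel_down k j v0 v1 : j <= k -> Vrel k v0 v1 -> Vrel j v0 v1.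
Proof.
  revert j; induction k as [|k IH]; intros j Hj Hv.
  - now replace j with 0 by lia.
  - destruct (Nat.eq_dec j (S k)) as [->|Hne]; auto.
    apply IH; [lia | apply Vrel_S in Hv; apply Hv].
Qed.

Lemma Vrel_val k v0 v1 : Vrel k v0 v1 -> is_val v0 /\ is_val v1.
Proof. intros Hv; exact (Vrel_down k 0 v0 v1 (Nat.le_0_l k) Hv). Qed.

Lemma Vrel_lam k b0 b1 : Vrel (S k) (Lam b0) (Lam b1) <->
  Vrel k (Lam b0) (Lam b1) /\
  forall w0 w1, Vrel k w0 w1 -> Erel k (subst0 w0 b0) (subst0 w1 b1).
Proof.
  rewrite Vrel_S; unfold Vrel_next; split; intros [Hv Happ]; split; auto.
  - intros; now apply (Happ b0 b1).
  - intros c0 c1 [= <-] [= <-]; exact Happ.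
Qed.

Lemma Vrel_lam_0 b0 b1 : Vrel 0 (Lam b0) (Lam b1).
Proof. split; apply lam_is_val. Qed.

Lemma Mrel_down k j F0 F1 : j <= k -> Mrel k F0 F1 -> Mrel j F0 F1.
Proof.
  intros Hj (HF0 & HF1 & HM); do 2 (split; [assumption|]).
  intros; apply HM; auto; lia.
Qed.

Lemma Krel_down k j E0 E1 : j <= k -> Krel k E0 E1 -> Krel j E0 E1.
Proof.
  intros Hj (HE0 & HE1 & HK); do 2 (split; [assumption|]).
  intros; apply HK; auto; lia.
Qed.

Lemma Erel_down k j t0 t1 : j <= k -> Erel k t0 t1 -> Erel j t0 t1.
Proof. intros Hj HE i Hi; apply HE; lia. Qed.

Lemma obs_0 a b : obs 0 a b.
Proof. intros n v Hn; lia. Qed.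

Lemma obs_down k j a b : j <= k -> obs k a b -> obs j a b.
Proof. intros Hj HO n v Hn; apply HO; lia. Qed.

Lemma obs_step_l_S k a a' b : step a a' -> obs k a' b -> obs (S k) a b.
Proof.
  intros Hs HO n v Hn Hsteps Hv.
  destruct (nsteps_step_val _ _ _ _ Hs Hsteps Hv) as [n' [-> Hn']].
  apply (HO n' v); auto; lia.
Qed.

Lemma obs_step_l k a a' b : step a a' -> obs k a' b -> obs k a b.
Proof. intros Hs HO; apply (obs_down (S k)); auto; eapply obs_step_l_S; eauto. Qed.

Lemma obs_steps_r k a b b' : steps b b' -> obs k a b' -> obs k a b.
Proof.
  intros Hs HO n v Hn Hsteps Hv.
  destruct (HO n v Hn Hsteps Hv) as [w [Hw Hwv]].
  exists w; split; [eapply steps_trans|]; eauto.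
Qed.

Lemma Prel_0 p0 p1 : Prel 0 p0 p1.
Proof. intros j Hj F0 F1 _; replace j with 0 by lia; apply obs_0. Qed.

Lemma Prel_step_l k p p' q : step p p' -> Prel k p' q -> Prel k p q.
Proof.
  intros Hs HP j Hj F0 F1 HM.
  apply (obs_step_l _ _ (plug F0 p')); [apply step_plug; [apply HM | exact Hs]|].
  apply HP; auto.
Qed.

Lemma Prel_steps_r k p q q' : steps q q' -> Prel k p q' -> Prel k p q.
Proof.
  intros Hs HP j Hj F0 F1 HM.
  apply (obs_steps_r _ _ _ (plug F1 q')); [apply steps_plug; [apply HM | exact Hs]|].
  apply HP; auto.
Qed.

(** Reducing the left program strictly decreases the number of steps it has
    left to terminate; this is what pays for unfolding [Vrel] at a lower index. *)
Lemma Prel_step_S k p p' q q' : step p p' -> steps q q' -> Prel k p' q' -> Prel (S k) p q.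
Proof.
  intros Hp Hq HP [|j] Hj F0 F1 HM; [apply obs_0|].
  apply (obs_steps_r _ _ _ (plug F1 q')); [apply steps_plug; [apply HM | exact Hq]|].
  apply (obs_step_l_S _ _ (plug F0 p')); [apply step_plug; [apply HM | exact Hp]|].
  apply HP; [lia | eapply Mrel_down; [|exact HM]; lia].
Qed.

Lemma Prel_of_Vrel k v0 v1 : Vrel k v0 v1 -> Prel k v0 v1.
Proof.
  intros Hv j Hj F0 F1 (_ & _ & HM); apply HM; [lia | eapply Vrel_down; eauto].
Qed.

Lemma Mrel_hole k : Mrel k EHole EHole.
Proof.
  split; [exact I | split; [exact I|]].
  intros j Hj w0 w1 Hw n v _ _ _; exists w1; split; [apply steps_refl | apply (Vrel_val _ _ _ Hw)].
Qed.

Lemma ecomp_hole_r F : ecomp F EHole = F.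
Proof. induction F; simpl; f_equal; auto. Qed.

Lemma Mrel_ecomp k F0 F1 G0 G1 : Mrel k F0 F1 -> eval_ctx G0 -> eval_ctx G1 ->
  (forall j w0 w1, j <= k -> Vrel j w0 w1 -> Prel j (plug G0 w0) (plug G1 w1)) ->
  Mrel k (ecomp F0 G0) (ecomp F1 G1).
Proof.
  intros HM HG0 HG1 HG.
  split; [apply eval_ctx_ecomp; [apply HM | exact HG0]|].
  split; [apply eval_ctx_ecomp; [apply HM | exact HG1]|].
  intros j Hj w0 w1 Hw; rewrite !plug_ecomp.
  apply (HG j); auto; eapply Mrel_down; eauto.
Qed.

Lemma Mrel_reset k F0 F1 E0 E1 : Mrel k F0 F1 -> Krel k E0 E1 ->
  Mrel k (ecomp F0 (EReset E0)) (ecomp F1 (EReset E1)).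
Proof.
  intros HM (HE0 & HE1 & HK); apply Mrel_ecomp;
    [exact HM | exact (proj2 HE0) | exact (proj2 HE1) | intros; apply HK; auto].
Qed.

Lemma Prel_reset_l k p0 p1 : Prel k p0 p1 -> Prel k (Reset p0) p1.
Proof.
  intros HP j Hj F0 F1 HM.
  rewrite <- (ecomp_hole_r F1).
  change (plug F0 (Reset p0)) with (plug F0 (plug (EReset EHole) p0)).
  rewrite <- plug_ecomp; apply HP; auto.
  apply Mrel_ecomp; auto; [exact I | exact I|].
  intros i w0 w1 _ Hw; destruct (Vrel_val _ _ _ Hw) as [Hv0 _].
  apply (Prel_step_l _ _ w0); [apply contract_step; constructor; exact Hv0|].
  apply Prel_of_Vrel, Hw.
Qed.

Lemma Prel_reset_r k p0 p1 : Prel k p0 p1 -> Prel k p0 (Reset p1).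
Proof.
  intros HP j Hj F0 F1 HM.
  rewrite <- (ecomp_hole_r F0).
  change (plug F1 (Reset p1)) with (plug F1 (plug (EReset EHole) p1)).
  rewrite <- plug_ecomp; apply HP; auto.
  apply Mrel_ecomp; auto; [exact I | exact I|].
  intros i w0 w1 _ Hw; destruct (Vrel_val _ _ _ Hw) as [_ Hv1].
  apply (Prel_steps_r _ _ _ w1); [apply steps_one, contract_step; constructor; exact Hv1|].
  apply Prel_of_Vrel, Hw.
Qed.

Lemma Krel_hole k : Krel k EHole EHole.
Proof.
  split; [apply pure_ctx_hole | split; [apply pure_ctx_hole|]].
  intros j Hj w0 w1 Hw; apply Prel_reset_l, Prel_reset_r, Prel_of_Vrel, Hw.
Qed.

Lemma Erel_Prel_reset k t0 t1 : Erel k t0 t1 -> Prel k (Reset t0) (Reset t1).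
Proof. intros HE; exact (HE k (le_n k) EHole EHole (Krel_hole k)). Qed.

Lemma Erel_of_Vrel k w0 w1 : Vrel k w0 w1 -> Erel k w0 w1.
Proof.
  intros Hw j Hj E0 E1 (_ & _ & HK); apply HK; [lia | eapply Vrel_down; eauto].
Qed.

Lemma Erel_of_Prel k p0 p1 : Prel k p0 p1 -> Erel k p0 p1.
Proof.
  intros HP j Hj E0 E1 HK i Hi F0 F1 HM.
  rewrite <- !plug_ecomp_reset; apply HP; [lia|].
  apply Mrel_reset; auto; eapply Krel_down; eauto.
Qed.

Lemma Erel_reset k t0 t1 : Erel k t0 t1 -> Erel k (Reset t0) (Reset t1).
Proof. intros; apply Erel_of_Prel, Erel_Prel_reset; assumption. Qed.

Lemma Erel_contract_l k a a' b : contract a a' -> Erel k a' b -> Erel k a b.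
Proof.
  intros Hc HE j Hj E0 E1 HK; apply (Prel_step_l _ _ (Reset (plug E0 a')));
    [apply step_reset_plug; [apply HK | exact Hc] | apply HE; auto].
Qed.

Lemma Erel_contract_r k a b b' : contract b b' -> Erel k a b' -> Erel k a b.
Proof.
  intros Hc HE j Hj E0 E1 HK; apply (Prel_steps_r _ _ _ (Reset (plug E1 b')));
    [apply steps_one, step_reset_plug; [apply HK | exact Hc] | apply HE; auto].
Qed.

Lemma Erel_bind k C0 C1 u0 u1 : pure_ctx C0 -> pure_ctx C1 -> Erel k u0 u1 ->
  (forall j w0 w1, j <= k -> Vrel j w0 w1 -> Erel j (plug C0 w0) (plug C1 w1)) ->
  Erel k (plug C0 u0) (plug C1 u1).
Proof.
  intros HC0 HC1 Hu HC j Hj E0 E1 HK; rewrite <- !plug_ecomp; apply Hu; auto.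
  destruct HK as (HE0 & HE1 & HK).
  split; [apply pure_ctx_ecomp; auto | split; [apply pure_ctx_ecomp; auto|]].
  intros i Hi w0 w1 Hw; rewrite !plug_ecomp.
  apply (HC i w0 w1); [lia | exact Hw | lia |].
  split; [exact HE0 | split; [exact HE1 | intros; apply HK; auto; lia]].
Qed.

Lemma Erel_bind_prog k C0 C1 p0 p1 : eval_ctx C0 -> eval_ctx C1 -> Prel k p0 p1 ->
  (forall j w0 w1, j <= k -> Vrel j w0 w1 -> Erel j (plug C0 w0) (plug C1 w1)) ->
  Erel k (plug C0 p0) (plug C1 p1).
Proof.
  intros HC0 HC1 Hp HC j Hj E0 E1 HK i Hi F0 F1 HM.
  rewrite <- !plug_ecomp, <- !plug_ecomp_reset; apply Hp; [lia|].
  apply Mrel_ecomp; [exact HM | apply eval_ctx_reset; [apply HK | exact HC0]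
                    | apply eval_ctx_reset; [apply HK | exact HC1] |].
  intros h w0 w1 Hh Hw; simpl; rewrite !plug_ecomp.
  apply (HC h w0 w1); [lia | exact Hw | lia | eapply Krel_down; [|exact HK]; lia].
Qed.

Lemma Vrel_lam_intro k b0 b1 :
  (forall j w0 w1, j < k -> Vrel j w0 w1 -> Erel j (subst0 w0 b0) (subst0 w1 b1)) ->
  Vrel k (Lam b0) (Lam b1).
Proof.
  induction k as [|k IH]; intros Hb; [apply Vrel_lam_0|].
  apply Vrel_lam; split; [apply IH; auto | intros; apply Hb; auto].
Qed.

Lemma Vrel_lam_elim k j b0 b1 w0 w1 : j < k -> Vrel k (Lam b0) (Lam b1) ->
  Vrel j w0 w1 -> Erel j (subst0 w0 b0) (subst0 w1 b1).
Proof.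
  intros Hj Hv Hw; apply (Vrel_down k (S j)) in Hv; [|lia].
  apply Vrel_lam in Hv; apply Hv, Hw.
Qed.

Lemma Erel_beta k w0 w1 x0 x1 : Vrel k w0 w1 -> Vrel k x0 x1 ->
  Erel k (App w0 x0) (App w1 x1).
Proof.
  intros Hw Hx [|j] Hj E0 E1 HK; [apply Prel_0|].
  destruct (Vrel_val _ _ _ Hw) as [[b0 ->] [b1 ->]].
  destruct (Vrel_val _ _ _ Hx) as [Hx0 Hx1].
  apply (Prel_step_S _ _ (Reset (plug E0 (subst0 x0 b0))) _ (Reset (plug E1 (subst0 x1 b1)))).
  - apply step_reset_plug; [apply HK | constructor; exact Hx0].
  - apply steps_one, step_reset_plug; [apply HK | constructor; exact Hx1].
  - refine (Vrel_lam_elim k j b0 b1 x0 x1 _ Hw _ j (le_n j) E0 E1 _);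
      [lia | eapply Vrel_down; [|exact Hx] | eapply Krel_down; [|exact HK]]; lia.
Qed.

Lemma Erel_app k a0 a1 c0 c1 : Erel k a0 a1 -> Erel k c0 c1 ->
  Erel k (App a0 c0) (App a1 c1).
Proof.
  intros Ha Hc; apply (Erel_bind k (EAppL EHole c0) (EAppL EHole c1));
    try apply pure_ctx_appl, pure_ctx_hole; auto.
  intros j w0 w1 Hj Hw; destruct (Vrel_val _ _ _ Hw) as [Hv0 Hv1].
  apply (Erel_bind j (EAppR w0 EHole) (EAppR w1 EHole));
    try apply pure_ctx_appr, pure_ctx_hole; auto; [eapply Erel_down; eauto|].
  intros i x0 x1 Hi Hx; apply Erel_beta; auto; eapply Vrel_down; eauto.
Qed.

Lemma Vrel_ectx_cont k E0 E1 : Krel k E0 E1 -> Vrel k (ectx_cont E0) (ectx_cont E1).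
Proof.
  intros HK; apply Vrel_lam_intro; intros j w0 w1 Hj Hw.
  change (Erel j (Reset (subst0 w0 (ectx_body E0))) (Reset (subst0 w1 (ectx_body E1)))).
  rewrite !subst0_ectx_body; apply Erel_of_Prel.
  destruct HK as (_ & _ & HK); apply HK; auto; lia.
Qed.

Lemma Prel_shift k E0 E1 a0 a1 : Krel k E0 E1 ->
  Prel k (Reset (subst0 (ectx_cont E0) a0)) (Reset (subst0 (ectx_cont E1) a1)) ->
  Prel k (Reset (plug E0 (Shift a0))) (Reset (plug E1 (Shift a1))).
Proof.
  intros HK HP.
  apply (Prel_step_l _ _ (Reset (subst0 (ectx_cont E0) a0)));
    [apply contract_step, c_shift, HK|].
  apply (Prel_steps_r _ _ _ (Reset (subst0 (ectx_cont E1) a1)));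
    [apply steps_one, contract_step, c_shift, HK | exact HP].
Qed.

Lemma Erel_shift k a0 a1 :
  (forall j c0 c1, j <= k -> Vrel j c0 c1 -> Erel j (subst0 c0 a0) (subst0 c1 a1)) ->
  Erel k (Shift a0) (Shift a1).
Proof.
  intros Ha j Hj E0 E1 HK; apply Prel_shift; auto.
  apply Erel_Prel_reset, Ha, Vrel_ectx_cont; auto.
Qed.

Lemma Krel_cont_app_l k E0 E1 : Krel k E0 E1 -> Krel k (EAppR (ectx_cont E0) EHole) E1.
Proof.
  intros HK; pose proof HK as (HE0 & HE1 & HKw).
  split; [apply pure_ctx_appr; [apply lam_is_val | apply pure_ctx_hole]|split; [exact HE1|]].
  intros j Hj w0 w1 Hw; destruct (Vrel_val _ _ _ Hw) as [Hv0 _].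
  apply (Prel_step_l _ _ (Reset (Reset (plug E0 w0)))); [|apply Prel_reset_l, HKw; auto].
  apply (step_reset_plug EHole); [apply pure_ctx_hole|].
  rewrite <- (subst0_ectx_body w0 E0); constructor; exact Hv0.
Qed.

Lemma Krel_cont_app_r k E0 E1 : Krel k E0 E1 -> Krel k E0 (EAppR (ectx_cont E1) EHole).
Proof.
  intros HK; pose proof HK as (HE0 & HE1 & HKw).
  split; [exact HE0 | split; [apply pure_ctx_appr; [apply lam_is_val | apply pure_ctx_hole]|]].
  intros j Hj w0 w1 Hw; destruct (Vrel_val _ _ _ Hw) as [_ Hv1].
  apply (Prel_steps_r _ _ _ (Reset (Reset (plug E1 w1)))); [|apply Prel_reset_r, HKw; auto].
  apply steps_one, (step_reset_plug EHole); [apply pure_ctx_hole|].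
  rewrite <- (subst0_ectx_body w1 E1); constructor; exact Hv1.
Qed.

Lemma Vrel_eta_l k w0 w1 : Vrel k w0 w1 -> Vrel k (Lam (App (lift w0) (Var 0))) w1.
Proof.
  intros Hw; destruct (Vrel_val _ _ _ Hw) as [[c0 ->] [c1 ->]].
  apply Vrel_lam_intro; intros j x0 x1 Hj Hx.
  change (Erel j (App (subst0 x0 (lift (Lam c0))) x0) (subst0 x1 c1)); rewrite subst0_lift.
  apply (Erel_contract_l _ _ (subst0 x0 c0)); [constructor; apply (Vrel_val _ _ _ Hx)|].
  apply (Vrel_lam_elim k); auto.
Qed.

Lemma Vrel_eta_r k w0 w1 : Vrel k w0 w1 -> Vrel k w0 (Lam (App (lift w1) (Var 0))).
Proof.
  intros Hw; destruct (Vrel_val _ _ _ Hw) as [[c0 ->] [c1 ->]].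
  apply Vrel_lam_intro; intros j x0 x1 Hj Hx.
  change (Erel j (subst0 x0 c0) (App (subst0 x1 (lift (Lam c1))) x1)); rewrite subst0_lift.
  apply (Erel_contract_r _ _ _ (subst0 x1 c1)); [constructor; apply (Vrel_val _ _ _ Hx)|].
  apply (Vrel_lam_elim k); auto.
Qed.

Definition Vrel_subst (k : nat) (g0 g1 : nat -> term) : Prop :=
  forall n, Vrel k (g0 n) (g1 n).

Definition log_approx (t0 t1 : term) : Prop :=
  forall k g0 g1, Vrel_subst k g0 g1 -> Erel k (subst g0 t0) (subst g1 t1).

Definition log_equiv (t0 t1 : term) : Prop := log_approx t0 t1 /\ log_approx t1 t0.

Lemma Vrel_subst_down k j g0 g1 : j <= k -> Vrel_subst k g0 g1 -> Vrel_subst j g0 g1.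
Proof. intros Hj Hg n; eapply Vrel_down; eauto. Qed.

Lemma Vrel_subst_scons k g0 g1 w0 w1 : Vrel k w0 w1 -> Vrel_subst k g0 g1 ->
  Vrel_subst k (scons w0 g0) (scons w1 g1).
Proof. intros Hw Hg [|n]; simpl; auto. Qed.

Lemma Vrel_subst_val k g0 g1 : Vrel_subst k g0 g1 ->
  (forall n, is_val (g0 n)) /\ (forall n, is_val (g1 n)).
Proof. intros Hg; split; intros n; apply (Vrel_val _ _ _ (Hg n)). Qed.

Lemma Erel_subst_scons t0 t1 k j g0 g1 w0 w1 : log_approx t0 t1 -> j <= k ->
  Vrel_subst k g0 g1 -> Vrel j w0 w1 ->
  Erel j (subst0 w0 (subst (up g0) t0)) (subst0 w1 (subst (up g1) t1)).
Proof.
  intros Ht Hj Hg Hw; rewrite !subst0_subst_up.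
  apply Ht, Vrel_subst_scons; [exact Hw | eapply Vrel_subst_down; eauto].
Qed.

Lemma Vrel_lam_subst t0 t1 k g0 g1 : log_approx t0 t1 -> Vrel_subst k g0 g1 ->
  Vrel k (Lam (subst (up g0) t0)) (Lam (subst (up g1) t1)).
Proof.
  intros Ht Hg; apply Vrel_lam_intro; intros j w0 w1 Hj Hw.
  apply (Erel_subst_scons t0 t1 k); auto; lia.
Qed.

Lemma log_approx_var n : log_approx (Var n) (Var n).
Proof. intros k g0 g1 Hg; apply Erel_of_Vrel, Hg. Qed.

Lemma log_approx_lam t0 t1 : log_approx t0 t1 -> log_approx (Lam t0) (Lam t1).
Proof. intros Ht k g0 g1 Hg; apply Erel_of_Vrel, Vrel_lam_subst; assumption. Qed.

Lemma log_approx_app a0 a1 c0 c1 : log_approx a0 a1 -> log_approx c0 c1 ->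
  log_approx (App a0 c0) (App a1 c1).
Proof. intros Ha Hc k g0 g1 Hg; apply Erel_app; auto. Qed.

Lemma log_approx_shift t0 t1 : log_approx t0 t1 -> log_approx (Shift t0) (Shift t1).
Proof.
  intros Ht k g0 g1 Hg; apply Erel_shift; intros; apply (Erel_subst_scons t0 t1 k); auto.
Qed.

Lemma log_approx_reset t0 t1 : log_approx t0 t1 -> log_approx (Reset t0) (Reset t1).
Proof. intros Ht k g0 g1 Hg; apply Erel_reset; auto. Qed.

Lemma log_approx_refl t : log_approx t t.
Proof.
  induction t; auto using log_approx_var, log_approx_lam, log_approx_app,
    log_approx_shift, log_approx_reset.
Qed.

Lemma Vrel_subst_kh_val v k g0 g1 : kh_val v -> Vrel_subst k g0 g1 ->
  Vrel k (subst g0 v) (subst g1 v).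
Proof.
  intros [[b ->] | [n ->]] Hg; [apply Vrel_lam_subst, Hg; apply log_approx_refl | apply Hg].
Qed.

Lemma Erel_plug_subst_ectx E k g0 g1 w0 w1 : Vrel_subst k g0 g1 -> Vrel k w0 w1 ->
  Erel k (plug (subst_ectx g0 E) w0) (plug (subst_ectx g1 E) w1).
Proof.
  intros Hg Hw; rewrite <- !subst_scons_ectx_body.
  apply log_approx_refl, Vrel_subst_scons; assumption.
Qed.

Lemma kh_val_subst v g : kh_val v -> (forall n, is_val (g n)) -> is_val (subst g v).
Proof. intros [[b ->] | [n ->]] Hg; [apply lam_is_val | apply Hg]. Qed.

Lemma kh_pure_ctx_subst E g : kh_pure_ctx E -> (forall n, is_val (g n)) ->
  pure_ctx (subst_ectx g E).
Proof.
  intros HE Hg; induction E as [|v E IH|E IH u|E IH]; destruct HE as [N V]; simpl in *.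
  - apply pure_ctx_hole.
  - destruct V as [Hv V]; apply pure_ctx_appr; [apply kh_val_subst | apply IH; split]; auto.
  - apply pure_ctx_appl, IH; split; auto.
  - contradiction.
Qed.

Lemma log_equiv_contract a b :
  (forall g, (forall n, is_val (g n)) -> contract (subst g a) (subst g b)) ->
  log_equiv a b.
Proof.
  intros Hab; split; intros k g0 g1 Hg; destruct (Vrel_subst_val _ _ _ Hg) as [V0 V1].
  - eapply Erel_contract_l; [apply Hab, V0 | apply log_approx_refl, Hg].
  - eapply Erel_contract_r; [apply Hab, V1 | apply log_approx_refl, Hg].
Qed.

Lemma log_equiv_beta_v t v : kh_val v -> log_equiv (App (Lam t) v) (subst0 v t).
Proof.
  intros Hv; apply log_equiv_contract; intros g Hg; simpl; rewrite subst_subst0.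
  constructor; apply kh_val_subst; auto.
Qed.

Lemma log_equiv_reset_shift E t : kh_pure_ctx E ->
  log_equiv (Reset (plug E (Shift t))) (Reset (subst0 (ectx_cont E) t)).
Proof.
  intros HE; apply log_equiv_contract; intros g Hg; simpl.
  rewrite subst_subst0, subst_plug; simpl; unfold ectx_cont; simpl.
  rewrite subst_up_ectx_body; apply c_shift, kh_pure_ctx_subst; auto.
Qed.

Lemma log_equiv_reset_val v : kh_val v -> log_equiv (Reset v) v.
Proof. intros Hv; apply log_equiv_contract; intros g Hg; constructor; apply kh_val_subst; auto. Qed.

Lemma log_equiv_beta_omega E t : kh_pure_ctx E ->
  log_equiv (App (Lam (ectx_body E)) t) (plug E t).
Proof.
  intros HE; split; intros k g0 g1 Hg; destruct (Vrel_subst_val _ _ _ Hg) as [V0 V1];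
    simpl; rewrite ?subst_up_ectx_body, subst_plug.
  - apply (Erel_bind k (EAppR (Lam (ectx_body (subst_ectx g0 E))) EHole) (subst_ectx g1 E));
      [apply pure_ctx_appr, pure_ctx_hole; apply lam_is_val | apply kh_pure_ctx_subst; auto
      | apply log_approx_refl, Hg |].
    intros j w0 w1 Hj Hw; apply (Erel_contract_l _ _ (plug (subst_ectx g0 E) w0)).
    + apply contract_beta_ectx_body, (Vrel_val _ _ _ Hw).
    + apply Erel_plug_subst_ectx; [eapply Vrel_subst_down; eauto | exact Hw].
  - apply (Erel_bind k (subst_ectx g0 E) (EAppR (Lam (ectx_body (subst_ectx g1 E))) EHole));
      [apply kh_pure_ctx_subst; auto | apply pure_ctx_appr, pure_ctx_hole; apply lam_is_val
      | apply log_approx_refl, Hg |].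
    intros j w0 w1 Hj Hw; apply (Erel_contract_r _ _ _ (plug (subst_ectx g1 E) w1)).
    + apply contract_beta_ectx_body, (Vrel_val _ _ _ Hw).
    + apply Erel_plug_subst_ectx; [eapply Vrel_subst_down; eauto | exact Hw].
Qed.

Lemma Erel_reset_lift_val k a0 a1 w0 w1 : Vrel k w0 w1 ->
  Erel k (subst0 w0 a0) (subst0 w1 a1) ->
  Erel k (Reset (App (Lam a0) w0)) (App (Lam (Reset a1)) w1) /\
  Erel k (App (Lam (Reset a0)) w0) (Reset (App (Lam a1) w1)).
Proof.
  intros Hw Ha; destruct (Vrel_val _ _ _ Hw) as [Hv0 Hv1]; split.
  - apply (Erel_contract_r _ _ _ (Reset (subst0 w1 a1))); [constructor; exact Hv1|].
    apply Erel_reset, (Erel_contract_l _ _ (subst0 w0 a0)); [constructor; exact Hv0 | exact Ha].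
  - apply (Erel_contract_l _ _ (Reset (subst0 w0 a0))); [constructor; exact Hv0|].
    apply Erel_reset, (Erel_contract_r _ _ _ (subst0 w1 a1)); [constructor; exact Hv1 | exact Ha].
Qed.

Lemma log_equiv_reset_lift t0 t1 :
  log_equiv (Reset (App (Lam t0) (Reset t1))) (App (Lam (Reset t0)) (Reset t1)).
Proof.
  split; intros k g0 g1 Hg; simpl;
    [apply (Erel_bind_prog k (EReset (EAppR (Lam (subst (up g0) t0)) EHole))
                             (EAppR (Lam (Reset (subst (up g1) t0))) EHole))
    |apply (Erel_bind_prog k (EAppR (Lam (Reset (subst (up g0) t0))) EHole)
                             (EReset (EAppR (Lam (subst (up g1) t0)) EHole)))];
    try (split; [apply lam_is_val | exact I]);
    try (apply Erel_Prel_reset, log_approx_refl, Hg);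
    intros j w0 w1 Hj Hw;
    [eapply proj1 | eapply proj2]; apply Erel_reset_lift_val; auto;
    apply (Erel_subst_scons t0 t0 k); auto; apply log_approx_refl.
Qed.

Lemma log_equiv_shift_reset t : log_equiv (Shift (Reset t)) (Shift t).
Proof.
  split; intros k g0 g1 Hg j Hj E0 E1 HK; apply Prel_shift; auto;
    [apply Prel_reset_l | apply Prel_reset_r]; apply Erel_Prel_reset;
    apply (Erel_subst_scons t t k); auto using log_approx_refl, Vrel_ectx_cont.
Qed.

Lemma log_equiv_eta_v v : kh_val v -> log_equiv (Lam (App (lift v) (Var 0))) v.
Proof.
  intros Hv; split; intros k g0 g1 Hg; apply Erel_of_Vrel;
    change (subst ?g (Lam (App (lift v) (Var 0))))
      with (Lam (App (subst (up g) (lift v)) (Var 0)));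
    rewrite ?subst_up_lift; [apply Vrel_eta_l | apply Vrel_eta_r];
    apply Vrel_subst_kh_val; assumption.
Qed.

Lemma log_equiv_shift_elim t : log_equiv (Shift (App (Var 0) (lift t))) t.
Proof.
  split; intros k g0 g1 Hg j Hj E0 E1 HK;
    change (subst ?g (Shift (App (Var 0) (lift t))))
      with (Shift (App (Var 0) (subst (up g) (lift t))));
    rewrite ?subst_up_lift.
  - apply (Prel_step_l _ _ (Reset (subst0 (ectx_cont E0) (App (Var 0) (lift (subst g0 t))))));
      [apply contract_step, c_shift, HK|].
    change (Prel j (Reset (App (ectx_cont E0) (subst0 (ectx_cont E0) (lift (subst g0 t)))))
                   (Reset (plug E1 (subst g1 t)))).
    rewrite subst0_lift; exact (log_approx_refl t k g0 g1 Hg j Hj _ _ (Krel_cont_app_l _ _ _ HK)).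
  - apply (Prel_steps_r _ _ _ (Reset (subst0 (ectx_cont E1) (App (Var 0) (lift (subst g1 t))))));
      [apply steps_one, contract_step, c_shift, HK|].
    change (Prel j (Reset (plug E0 (subst g0 t)))
                   (Reset (App (ectx_cont E1) (subst0 (ectx_cont E1) (lift (subst g1 t)))))).
    rewrite subst0_lift; exact (log_approx_refl t k g0 g1 Hg j Hj _ _ (Krel_cont_app_r _ _ _ HK)).
Qed.

(** * CPS equivalence implies contextual equivalence *)

Inductive tctx : Type :=
| CHole
| CLam (C : tctx)
| CAppL (C : tctx) (t : term)
| CAppR (t : term) (C : tctx)
| CShift (C : tctx)
| CReset (C : tctx).

Fixpoint cplug (C : tctx) (t : term) : term :=
  match C with
  | CHole => t
  | CLam C => Lam (cplug C t)
  | CAppL C u => App (cplug C t) u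
  | CAppR u C => App u (cplug C t)
  | CShift C => Shift (cplug C t)
  | CReset C => Reset (cplug C t)
  end.

Fixpoint ccomp (C D : tctx) : tctx :=
  match C with
  | CHole => D
  | CLam C => CLam (ccomp C D)
  | CAppL C u => CAppL (ccomp C D) u
  | CAppR u C => CAppR u (ccomp C D)
  | CShift C => CShift (ccomp C D)
  | CReset C => CReset (ccomp C D)
  end.

Lemma cplug_ccomp C D t : cplug (ccomp C D) t = cplug C (cplug D t).
Proof. induction C; simpl; f_equal; auto. Qed.

Lemma log_approx_cplug C t0 t1 : log_approx t0 t1 -> log_approx (cplug C t0) (cplug C t1).
Proof.
  induction C; intros; simpl; auto using log_approx_lam, log_approx_app,
    log_approx_shift, log_approx_reset, log_approx_refl.
Qed.

(** Contexts need not bind every free variable of the plugged term; the rest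
    are closed by a fixed value. *)
Definition id_subst : nat -> term := fun _ => Lam (Var 0).

Definition ctx_approx (t0 t1 : term) : Prop :=
  forall C, terminates (Reset (subst id_subst (cplug C t0))) ->
    terminates (Reset (subst id_subst (cplug C t1))).

Definition ctx_equiv (t0 t1 : term) : Prop := ctx_approx t0 t1 /\ ctx_approx t1 t0.

Lemma Vrel_id k : Vrel k (Lam (Var 0)) (Lam (Var 0)).
Proof. apply Vrel_lam_intro; intros; apply Erel_of_Vrel; assumption. Qed.

Lemma log_approx_ctx_approx t0 t1 : log_approx t0 t1 -> ctx_approx t0 t1.
Proof.
  intros Ht C [v [Hs Hv]]; destruct (steps_nsteps _ _ Hs) as [n Hn].
  assert (HP : Prel (S n) (Reset (subst id_subst (cplug C t0)))
                          (Reset (subst id_subst (cplug C t1))))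
    by (apply Erel_Prel_reset, log_approx_cplug; auto; intros m; apply Vrel_id).
  exact (HP (S n) (le_n _) EHole EHole (Mrel_hole _) n v (le_n _) Hn Hv).
Qed.

Lemma log_equiv_ctx_equiv t0 t1 : log_equiv t0 t1 -> ctx_equiv t0 t1.
Proof. intros [H01 H10]; split; apply log_approx_ctx_approx; assumption. Qed.

Lemma ctx_approx_cplug D t u : ctx_approx t u -> ctx_approx (cplug D t) (cplug D u).
Proof. intros H C; rewrite <- !cplug_ccomp; apply H. Qed.

Lemma ctx_equiv_cplug D t u : ctx_equiv t u -> ctx_equiv (cplug D t) (cplug D u).
Proof. intros [H1 H2]; split; apply ctx_approx_cplug; assumption. Qed.

Lemma ctx_equiv_trans t u w : ctx_equiv t u -> ctx_equiv u w -> ctx_equiv t w.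
Proof. intros [H1 H2] [H3 H4]; split; intros C HC; auto. Qed.

Lemma cps_eq_ctx_equiv t u : cps_eq t u -> ctx_equiv t u.
Proof.
  induction 1.
  - split; intros C HC; exact HC.
  - destruct IHcps_eq; split; assumption.
  - eapply ctx_equiv_trans; eauto.
  - apply (ctx_equiv_cplug (CLam CHole)); assumption.
  - apply ctx_equiv_trans with (App t' u);
      [apply (ctx_equiv_cplug (CAppL CHole u)) | apply (ctx_equiv_cplug (CAppR t' CHole))];
      assumption.
  - apply (ctx_equiv_cplug (CShift CHole)); assumption.
  - apply (ctx_equiv_cplug (CReset CHole)); assumption.
  - apply log_equiv_ctx_equiv, log_equiv_beta_v; assumption.
  - apply log_equiv_ctx_equiv, log_equiv_beta_omega; assumption.
  - apply log_equiv_ctx_equiv, log_equiv_reset_shift; assumption.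
  - apply log_equiv_ctx_equiv, log_equiv_reset_lift.
  - apply log_equiv_ctx_equiv, log_equiv_reset_val; assumption.
  - apply log_equiv_ctx_equiv, log_equiv_shift_reset.
  - apply log_equiv_ctx_equiv, log_equiv_eta_v; assumption.
  - apply log_equiv_ctx_equiv, log_equiv_shift_elim.
Qed.

Lemma closed_at_ren t k k' xi : closed_at k t -> (forall n, n < k -> xi n < k') ->
  closed_at k' (ren xi t).
Proof.
  revert k k' xi; induction t; intros k k' xi Ht Hxi; simpl in *;
    try tauto; try (apply (IHt (S k)); auto; intros [|n] Hn; simpl; [lia|];
                    specialize (Hxi n); lia).
  - apply Hxi; auto.
  - destruct Ht; split; eauto.
  - eauto.
Qed.

Lemma closed_lift k t : closed_at k t -> closed_at (S k) (lift t).
Proof. intros; eapply closed_at_ren; eauto; intros; lia. Qed.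

Lemma closed_at_subst t k k' s : closed_at k t -> (forall n, n < k -> closed_at k' (s n)) ->
  closed_at k' (subst s t).
Proof.
  revert k k' s; induction t; intros k k' s Ht Hs; simpl in *;
    try tauto; try (apply (IHt (S k)); auto; intros [|n] Hn; simpl; [lia|];
                    apply closed_lift, Hs; lia).
  - apply Hs; auto.
  - destruct Ht; split; eauto.
  - eauto.
Qed.

Lemma closed_subst0 t v k : closed_at (S k) t -> closed_at k v -> closed_at k (subst0 v t).
Proof. intros Ht Hv; eapply closed_at_subst; eauto; intros [|n] Hn; simpl; auto; lia. Qed.

Lemma closed_at_mono t k k' : closed_at k t -> k <= k' -> closed_at k' t.
Proof. intros Ht Hk; rewrite <- (ren_id t); eapply closed_at_ren; eauto; intros; lia. Qed.

Lemma closed_fvbound t : closed_at (fvbound t) t.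
Proof.
  induction t; simpl; auto;
    try (split; eapply closed_at_mono; eauto; lia); eapply closed_at_mono; eauto; lia.
Qed.

Lemma closed_lams n k t : closed_at (n + k) t -> closed_at k (lams n t).
Proof.
  revert k t; induction n as [|n IH]; intros k t Ht; simpl in *; auto.
  apply IH; rewrite Nat.add_succ_r; exact Ht.
Qed.

Lemma subst_closed t k s : closed_at k t -> (forall n, n < k -> s n = Var n) -> subst s t = t.
Proof.
  revert k s; induction t; intros k s Ht Hs; simpl in *; f_equal;
    try (apply (IHt (S k)); auto; intros [|n] Hn; simpl; auto; rewrite Hs; auto; lia);
    try apply Hs; try destruct Ht; eauto.
Qed.

Fixpoint closed_ectx (k : nat) (F : ectx) : Prop :=
  match F with
  | EHole => True
  | EAppR v F => closed_at k v /\ closed_ectx k F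
  | EAppL F u => closed_ectx k F /\ closed_at k u
  | EReset F => closed_ectx k F
  end.

Lemma closed_plug F k t : closed_at k (plug F t) <-> closed_ectx k F /\ closed_at k t.
Proof. induction F; simpl; try rewrite IHF; tauto. Qed.

Lemma closed_lift_ectx F k : closed_ectx k F -> closed_ectx (S k) (lift_ectx F).
Proof. unfold lift_ectx; induction F; simpl; intuition; apply closed_lift; auto. Qed.

Lemma contract_closed a b k : contract a b -> closed_at k a -> closed_at k b.
Proof.
  intros Hc Ha; destruct Hc; simpl in *.
  - apply closed_subst0; apply Ha.
  - apply closed_plug in Ha; destruct Ha as [HE Ht].
    apply closed_subst0; [exact Ht|]; simpl.
    apply closed_plug; split; [apply closed_lift_ectx; exact HE | simpl; lia].
  - exact Ha.
Qed.

Lemma step_closed a b : step a b -> closed a -> closed b.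
Proof.
  intros [F x y HF Hc]; unfold closed; rewrite !closed_plug.
  intros [HF0 Hx]; split; [|eapply contract_closed]; eauto.
Qed.

Lemma steps_closed a b : steps a b -> closed a -> closed b.
Proof. induction 1; eauto using step_closed. Qed.

Lemma step_reset_inv p x : step (Reset p) x ->
  (exists p', step p p' /\ x = Reset p') \/ (is_val p /\ x = p) \/
  (exists E t, pure_ctx E /\ p = plug E (Shift t) /\ x = Reset (subst0 (ectx_cont E) t)).
Proof.
  intros H; inversion H as [F a b HF Hc Ha Hb]; destruct F; simpl in *; try discriminate.
  - subst; inversion Hc; subst; [right; right; eauto | right; left; auto].
  - injection Ha as <-; subst; left; exists (plug F b); split; [constructor|]; auto.
Qed.

Lemma program_step p p' : is_program p -> step p p' -> is_program p' \/ is_val p'.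
Proof.
  intros [q ->] Hs.
  destruct (step_reset_inv _ _ Hs) as [[q' [_ ->]] | [[Hv ->] | (E & t & _ & _ & ->)]];
    [left | right | left]; eauto; eexists; reflexivity.
Qed.

Lemma pure_shift_not_program E t : pure_ctx E -> ~ is_program (plug E (Shift t)).
Proof. intros [N _] [q Hq]; destruct E; simpl in *; try discriminate; contradiction. Qed.

Lemma steps_reset_terminates a w : steps a w -> is_val w ->
  forall p, a = Reset p -> is_program p \/ is_val p -> terminates p.
Proof.
  induction 1 as [t | t u w Hs _ IH]; intros Hw p -> Hp; [destruct Hw; discriminate|].
  destruct (step_reset_inv _ _ Hs) as [[p' [Hp' ->]] | [[Hv ->] | (E & t' & HE & -> & _)]].
  - destruct Hp as [Hp | Hp]; [|exfalso; eapply val_irreducible; eauto].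
    destruct (IH Hw p' eq_refl (program_step p p' Hp Hp')) as [v [Hv1 Hv2]].
    exists v; split; [econstructor|]; eauto.
  - exists p; split; [apply steps_refl | exact Hv].
  - exfalso; destruct Hp as [Hp | Hp];
      [eapply pure_shift_not_program | eapply plug_shift_not_val]; eauto.
Qed.

Lemma terminates_reset t : terminates t -> terminates (Reset t).
Proof.
  intros [v [Hs Hv]]; exists v; split; [|exact Hv].
  apply steps_trans with (Reset v); [apply (steps_plug (EReset EHole)); [exact I | exact Hs]|].
  apply steps_one, contract_step; constructor; exact Hv.
Qed.

Lemma cps_eq_terminates p0 p1 : cps_eq p0 p1 -> closed p0 -> closed p1 -> is_program p1 ->
  terminates p0 -> terminates p1.
Proof.
  intros Hc C0 C1 P1 H0.
  assert (Hcl : forall p, closed p -> subst id_subst p = p)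
    by (intros p Hp; apply (subst_closed _ 0); auto; intros; lia).
  destruct (cps_eq_ctx_equiv _ _ Hc) as [H01 _].
  specialize (H01 CHole); simpl in H01; rewrite !Hcl in H01; auto.
  destruct (H01 (terminates_reset _ H0)) as [w [Hw Hwv]].
  eapply steps_reset_terminates; eauto.
Qed.

(** * The bisimulation *)

Lemma cps_eq_plug F a b : cps_eq a b -> cps_eq (plug F a) (plug F b).
Proof. induction F; intros; simpl; auto using ce_app, ce_refl, ce_reset. Qed.

Lemma contract_cps_eq a b : contract a b -> cps_eq a b.
Proof.
  destruct 1.
  - apply ax_beta_v; left; assumption.
  - apply ax_reset_shift, pure_kh_pure_ctx; assumption.
  - apply ax_reset_val; left; assumption.
Qed.

Lemma step_cps_eq a b : step a b -> cps_eq a b.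
Proof. destruct 1; apply cps_eq_plug, contract_cps_eq; assumption. Qed.

Lemma steps_cps_eq a b : steps a b -> cps_eq a b.
Proof. induction 1; eauto using ce_refl, ce_trans, step_cps_eq. Qed.

Lemma cps_eq_lams n t u : cps_eq t u -> cps_eq (lams n t) (lams n u).
Proof. intros; induction n; simpl; auto using ce_lam. Qed.

Definition cps_env (Ev : rel) : Prop :=
  forall a b, Ev a b -> is_val a /\ closed a /\ is_val b /\ closed b /\ cps_eq a b.

Definition cps_bisim : env_relation := {|
  envs := cps_env;
  trip := fun Ev t0 t1 => cps_env Ev /\ closed t0 /\ closed t1 /\ cps_eq t0 t1 |}.

Lemma cps_env_add_pair Ev v0 v1 : cps_env Ev -> is_val v0 -> closed v0 ->
  is_val v1 -> closed v1 -> cps_eq v0 v1 -> cps_env (add_pair v0 v1 Ev).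
Proof. intros HE; intros; intros a b [[-> ->] | Hab]; auto. Qed.

Lemma ctx_clo_cps_eq Ev t u : cps_env Ev -> ctx_clo Ev t u -> cps_eq t u.
Proof.
  intros HE; induction 1; auto using ce_refl, ce_lam, ce_app, ce_shift, ce_reset.
  apply HE; assumption.
Qed.

Lemma hat_cps_env Ev E0 E1 : cps_env Ev -> hat Ev E0 E1 ->
  closed_ectx 0 E0 /\ closed_ectx 0 E1 /\
  forall a b, cps_eq a b -> cps_eq (plug E0 a) (plug E1 b).
Proof.
  intros HE; induction 1 as [| v0 v1 F0 F1 _ _ _ [IH0 [IH1 IH]] [Hv [C0 C1]]
                             | F0 F1 t0 t1 _ [IH0 [IH1 IH]] [Ht [C0 C1]]
                             | F0 F1 _ [IH0 [IH1 IH]]]; simpl;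
    repeat split; auto; intros; auto using ce_reset;
    apply ce_app; auto; eapply ctx_clo_cps_eq; eauto.
Qed.

Lemma cps_eq_value_step p0 p1 v0 : cps_eq p0 p1 -> closed p0 -> closed p1 ->
  is_program p1 -> step p0 v0 -> is_val v0 ->
  exists v1, steps p1 v1 /\ is_val v1 /\ closed v1 /\ cps_eq v0 v1.
Proof.
  intros Hc C0 C1 P1 Hs Hv0.
  destruct (cps_eq_terminates p0 p1 Hc C0 C1 P1) as [v1 [Hs1 Hv1]];
    [exists v0; split; [apply steps_one|]; assumption|].
  exists v1; split; [exact Hs1 | split; [exact Hv1 | split; [eapply steps_closed; eauto|]]].
  apply ce_trans with p0; [apply ce_sym, step_cps_eq, Hs|].
  apply ce_trans with p1; [exact Hc | apply steps_cps_eq, Hs1].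
Qed.

Lemma cps_bisim_well_formed : well_formed cps_bisim.
Proof.
  split.
  - intros Ev HE a b Hab; destruct (HE a b Hab) as (? & ? & ? & ? & _); tauto.
  - intros Ev t0 t1 (HE & C0 & C1 & _); split; [|tauto].
    intros a b Hab; destruct (HE a b Hab) as (? & ? & ? & ? & _); tauto.
Qed.

Lemma cps_bisim_prog Ev p0 p1 : trip cps_bisim Ev p0 p1 -> is_program p0 -> is_program p1 ->
  (forall p0', step p0 p0' -> is_program p0' ->
     exists p1', steps p1 p1' /\ is_program p1' /\ trip cps_bisim Ev p0' p1') /\
  (forall v0, step p0 v0 -> is_val v0 ->
     exists v1, steps p1 v1 /\ is_val v1 /\ envs cps_bisim (add_pair v0 v1 Ev)) /\
  (forall p1', step p1 p1' -> is_program p1' ->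
     exists p0', steps p0 p0' /\ is_program p0' /\ trip cps_bisim Ev p0' p1') /\
  (forall v1, step p1 v1 -> is_val v1 ->
     exists v0, steps p0 v0 /\ is_val v0 /\ envs cps_bisim (add_pair v0 v1 Ev)).
Proof.
  intros (HE & C0 & C1 & Hc) P0 P1; simpl.
  split; [|split; [|split]].
  - intros p0' Hs _; exists p1; split; [apply steps_refl | split; [exact P1|]].
    refine (conj HE (conj _ (conj C1 _))); [eapply step_closed; eauto|].
    apply ce_trans with p0; [apply ce_sym, step_cps_eq|]; assumption.
  - intros v0 Hs Hv0.
    destruct (cps_eq_value_step p0 p1 v0) as (v1 & Hs1 & Hv1 & Cv1 & Hv); auto.
    exists v1; split; [exact Hs1 | split; [exact Hv1|]].
    apply cps_env_add_pair; auto; eapply step_closed; eauto.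
  - intros p1' Hs _; exists p0; split; [apply steps_refl | split; [exact P0|]].
    refine (conj HE (conj C0 (conj _ _))); [eapply step_closed; eauto|].
    apply ce_trans with p1; [|apply step_cps_eq]; assumption.
  - intros v1 Hs Hv1.
    destruct (cps_eq_value_step p1 p0 v1) as (v0 & Hs0 & Hv0 & Cv0 & Hv); auto using ce_sym.
    exists v0; split; [exact Hs0 | split; [exact Hv0|]].
    apply cps_env_add_pair; auto using ce_sym; eapply step_closed; eauto.
Qed.

Lemma cps_bisim_env_bisim : env_bisim cps_bisim.
Proof.
  split; [exact cps_bisim_well_formed | split; [|split; [exact cps_bisim_prog|]]].
  - intros Ev t0 t1 (HE & C0 & C1 & Hc) _ E0 E1 _ _ Hh.
    destruct (hat_cps_env _ _ _ HE Hh) as (HE0 & HE1 & Hplug).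
    refine (conj HE (conj _ (conj _ _))); [apply closed_plug; auto | apply closed_plug; auto |].
    apply ce_reset, Hplug, Hc.
  - intros Ev t0 t1 v0 v1 HE Hl Hv0 Hv1 (Hv & Cv0 & Cv1); simpl.
    destruct (HE _ _ Hl) as (_ & Cl0 & _ & Cl1 & Hc).
    refine (conj HE (conj _ (conj _ _))); [apply closed_subst0; auto | apply closed_subst0; auto |].
    apply ce_trans with (App (Lam t0) v0); [apply ce_sym, ax_beta_v; left; exact Hv0|].
    apply ce_trans with (App (Lam t1) v1); [|apply ax_beta_v; left; exact Hv1].
    apply ce_app; [exact Hc | eapply ctx_clo_cps_eq; eauto].
Qed.

Theorem corollary3 : forall t0 t1 : term,
  cps_eq t0 t1 -> open_ext bisim_p_empty t0 t1.
Proof.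
  intros t0 t1 Hc; exists cps_bisim; split; [exact cps_bisim_env_bisim|].
  assert (Hlams : forall t, fvbound t <= Nat.max (fvbound t0) (fvbound t1) ->
                    closed (lams (Nat.max (fvbound t0) (fvbound t1)) t))
    by (intros t Ht; apply closed_lams; rewrite Nat.add_0_r;
        eapply closed_at_mono; [apply closed_fvbound | exact Ht]).
  refine (conj _ (conj (Hlams _ _) (conj (Hlams _ _) _))); [intros ? ? [] | lia | lia |].
  apply cps_eq_lams, Hc.
Qed.
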